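(* Let $H$ be a digraph (possibly with loops), let $D$ be an $H$-colored $3$-quasi-transitive digraph, let $k \geq 5$, and let $(u,v)$ be an arc of $C_{H}^{k-1}(D)$. If $(u,v)$ is an asymmetric arc of $C_{H}^{k-1}(D)$ (i.e., $(v,u)\notin A(C_{H}^{k-1}(D))$), then $d_{D}(u,v) \leq 2$.
   Context: All digraphs are finite. A digraph $D$ is $3$-quasi-transitive if for all distinct $u,v\in V(D)$, whenever there is a directed $uv$-path of length $3$, $u$ and $v$ are joined by an arc (in some direction). $d_D(u,v)$ is the length of a shortest directed $uv$-path in $D$. $D$ has no loops and comes with a map $\rho: A(D)\to V(H)$. For a walk $W=(x_0,\ldots,x_n)$ in $D$, there is an obstruction on $x_i$ if $(\rho(x_{i-1},x_i),\rho(x_i,x_{i+1})) \notin A(H)$; for an open walk this is considered at internal vertices $x_i$, $1\le i\le n-1$, for a closed walk at all $i\in\{0,\ldots,n-1\}$ with indices modulo $n$. $O_H(W)$ is the set of indices with an obstruction; the $H$-length is $l_H(W)=|O_H(W)|+1$ for open $W$ and $|O_H(W)|$ for closed $W$. The $(k-1,H)$-closure $C_H^{k-1}(D)$ is the digraph on $V(D)$ in which $(x,y)$ is an arc iff there is a directed $xy$-path in $D$ of $H$-length at most $k-1$. *)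

From mathcomp Require Import all_boot.
Set Implicit Arguments. Unset Strict Implicit. Unset Printing Implicit Defensive.

(* An H-coloring of D is a map rho : V -> V -> W (only its values on arcs matter),
   where H : rel W is a digraph possibly with loops. *)

Section Defs.
Variables (V W : finType) (D : rel V) (H : rel W) (rho : V -> V -> W).

(* directed path (x_0 = x, x_1, ..., x_n = y) encoded as x :: p, with distinct vertices;
   its length is size p *)
Definition is_dpath (x : V) (p : seq V) (y : V) : Prop :=
  [/\ path D x p, uniq (x :: p) & last x p = y].

Definition three_quasi_transitive : Prop :=
  forall (u v : V) (p : seq V), u != v -> is_dpath u p v -> size p = 3 -> D u v || D v u.

Fixpoint nobs (x y : V) (s : seq V) : nat :=
  match s with
  | [::] => 0
  | z :: s' => (~~ H (rho x y) (rho y z)) + nobs y z s'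
  end.

(* H-length of the open walk x :: p : |O_H(W)| + 1 *)
Definition H_length (x : V) (p : seq V) : nat :=
  match p with
  | [::] => 1
  | y :: s => (nobs x y s).+1
  end.

Definition closure_arc (k : nat) (x y : V) : Prop :=
  x != y /\ exists p, is_dpath x p y /\ H_length x p <= k.-1.

Definition dist_le (x y : V) (n : nat) : Prop :=
  exists p, is_dpath x p y /\ size p <= n.

End Defs.

From mathcomp Require Import all_boot zify.
Set Implicit Arguments. Unset Strict Implicit. Unset Printing Implicit Defensive.

(* Take a shortest uv-walk (a geodesic) in D.  In a 3-quasi-transitive digraph a geodesic
   a c1 c2 ... b of odd length at least 3 forces the arc (b, a): for length 3 this is
   quasi-transitivity plus minimality; for longer ones induction gives arcs b -> c2 and
   c3 -> a, and quasi-transitivity applied to the 3-path b c2 c3 a leaves only (b, a).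
   So if d(u, v) >= 3 there is a vu-walk of length at most 4 (v u; v c1 c2 c3 u when
   d(u, v) = 4; v w u with w three steps before v otherwise), whose H-length is at most
   4 <= k - 1: the arc (v, u) would also lie in the closure. *)

Section Geodesics.
Variables (V : finType) (D : rel V).

Definition walk (x : V) (p : seq V) (y : V) : bool := path D x p && (last x p == y).

Definition geodesic (x : V) (p : seq V) (y : V) : Prop :=
  walk x p y /\ forall q, walk x q y -> size p <= size q.

Lemma walk_cat x p1 p2 y :
  walk x (p1 ++ p2) y = walk x p1 (last x p1) && walk (last x p1) p2 y.
Proof. by rewrite /walk cat_path last_cat eqxx andbT andbA. Qed.

Lemma walk_last x p y : walk x p y -> last x p = y.
Proof. by case/andP=> _ /eqP. Qed.

Lemma dpath_of_walk x p y : walk x p y -> exists2 p', is_dpath D x p' y & size p' <= size p.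
Proof.
case/andP=> Dp /eqP <-; case: (shortenP Dp) => p' Dp' Up' sub_p'.
by exists p' => //; apply: uniq_leq_size sub_p'; case/andP: Up'.
Qed.

Lemma geodesic_exists x p y : walk x p y -> exists q, geodesic x q y.
Proof.
move=> xpy; pose walk_of_size n := [exists q : n.-tuple V, walk x q y].
have ex_n : exists n, walk_of_size n by exists (size p); apply/existsP; exists (in_tuple p).
case: (ex_minnP ex_n) => n /existsP[q xqy] min_n.
exists q; split=> // r xry; rewrite size_tuple; apply: min_n.
by apply/existsP; exists (in_tuple r).
Qed.

Lemma geodesic_cat x p1 p2 y : geodesic x (p1 ++ p2) y ->
  geodesic x p1 (last x p1) /\ geodesic (last x p1) p2 y.
Proof.
rewrite /geodesic walk_cat => -[/andP[xp1 p2y] min_p].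
split; split=> // q xqy.
- by have := min_p (q ++ p2); rewrite walk_cat (walk_last xqy) xqy p2y !size_cat leq_add2r; apply.
- by have := min_p (p1 ++ q); rewrite walk_cat xp1 xqy !size_cat leq_add2l; apply.
Qed.

Lemma geodesic_uniq x p y : geodesic x p y -> uniq (x :: p).
Proof.
case=> /andP[Dp /eqP <-]; case: (shortenP Dp) => p' Dp' Up' sub_p' min_p.
apply: (leq_size_uniq Up').
- by move=> z; rewrite !inE => /orP[-> // | /sub_p' ->]; rewrite orbT.
- by rewrite ltnS min_p // /walk Dp' eqxx.
Qed.

Lemma geodesic_no_shortcut x p y : geodesic x p y -> 1 < size p -> ~~ D x y.
Proof.
by case=> _ min_p; apply: contraTN => Dxy; rewrite -leqNgt (min_p [:: y]) // /walk /= Dxy eqxx.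
Qed.

Lemma geodesic_neq x p y : geodesic x p y -> 0 < size p -> x != y.
Proof.
by case=> _ min_p; apply: contraTneq => xy; rewrite -leqNgt (min_p [::]) // /walk xy eqxx.
Qed.

End Geodesics.

Section QuasiTransitive.
Variables (V : finType) (D : rel V).
Hypothesis qtD : three_quasi_transitive D.

Lemma geodesic_odd_back_arc a p b :
  geodesic D a p b -> odd (size p) -> 2 < size p -> D b a.
Proof.
have [n] := ubnP (size p); elim: n a p b => // n IH a p b.
rewrite ltnS => p_le gp p_odd p_gt2.
have not_ab := geodesic_no_shortcut gp (ltnW p_gt2).
have ab := geodesic_neq gp (ltnW (ltnW p_gt2)).
have Up := geodesic_uniq gp.
case: gp (gp) => /andP[Dp /eqP last_p] _ gp.
case: p p_le gp p_odd p_gt2 not_ab ab Up Dp last_p => [|c1 [|c2 [|c3 [|d [|e r]]]]] //.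
- move=> _ gp _ _ not_ab ab Up Dp last_p.
  by case/orP: (qtD ab (And3 Dp Up last_p) erefl) => //; rewrite (negbTE not_ab).
move=> p_le gp p_odd _ not_ab ab Up /and4P[_ _ D23 _] last_p.
rewrite /= in p_le p_odd last_p.
have [g_a3 _] := geodesic_cat (p1 := [:: c1; c2; c3]) (p2 := [:: d, e & r]) gp.
have [_ g_2b] := geodesic_cat (p1 := [:: c1; c2]) (p2 := [:: c3, d, e & r]) gp.
have D3a : D c3 a by apply: (IH _ _ _ _ g_a3) => //=; lia.
have Db2 : D b c2 by apply: (IH _ _ _ _ g_2b); rewrite //= ?negbK in p_odd *; lia.
have b_in : b \in [:: d, e & r] by rewrite -last_p inE mem_last orbT.
have U4 : uniq [:: b; c2; c3; a].
  move: Up => /and5P[a_notin _ c2_notin c3_notin _].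
  have b2 : b != c2 by apply: (memPn c2_notin); rewrite inE b_in orbT.
  have b3 : b != c3 by apply: (memPn c3_notin).
  have c23 : c3 != c2 by apply: (memPn c2_notin); apply: mem_head.
  have c2a : c2 != a by apply: (memPn a_notin); rewrite !inE eqxx orbT.
  have c3a : c3 != a by apply: (memPn a_notin); rewrite !inE eqxx !orbT.
  by rewrite /= !inE !negb_or b2 b3 (eq_sym b a) ab eq_sym c23 c2a c3a.
have ba : b != a by rewrite eq_sym.
have bp : is_dpath D b [:: c2; c3; a] a by split; rewrite //= Db2 D23 D3a.
by case/orP: (qtD ba bp erefl) => //; rewrite (negbTE not_ab).
Qed.

Lemma geodesic_return_walk u q v : geodesic D u q v -> 2 < size q ->
  exists2 r, walk D v r u & size r <= 4.
Proof.
move=> gq q_gt2; case q_odd: (odd (size q)).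
  by exists [:: u]; rewrite // /walk /= (geodesic_odd_back_arc gq) ?eqxx.
have [q4 | q_ne4] := eqVneq (size q) 4.
  case: q gq q4 {q_gt2 q_odd} => [|c1 [|c2 [|c3 [|c4 []]]]] // gq _.
  have [g_u3 _] := geodesic_cat (p1 := [:: c1; c2; c3]) (p2 := [:: c4]) gq.
  have [_ g_1v] := geodesic_cat (p1 := [:: c1]) (p2 := [:: c2; c3; c4]) gq.
  have D3u : D c3 u by apply: (geodesic_odd_back_arc g_u3).
  have Dv1 : D v c1 by apply: (geodesic_odd_back_arc g_1v).
  case/andP: gq.1 => /and4P[_ D12 D23 _] _.
  by exists [:: c1; c2; c3; u]; rewrite // /walk /= Dv1 D12 D23 D3u eqxx.
have q_gt5 : 5 < size q by move: q_gt2 q_ne4 q_odd; case: (size q) => [|[|[|[|[|[|]]]]]].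
have gq' : geodesic D u (take (size q - 3) q ++ drop (size q - 3) q) v by rewrite cat_take_drop.
have [g_uw g_wv] := geodesic_cat gq'.
set w := last u (take (size q - 3) q) in g_uw g_wv.
have Dvw : D v w by apply: (geodesic_odd_back_arc g_wv); rewrite size_drop; lia.
have Dwu : D w u.
  apply: (geodesic_odd_back_arc g_uw); rewrite size_takel ?leq_subr //; last lia.
  by rewrite oddB ?q_odd //; lia.
by exists [:: w; u]; rewrite // /walk /= Dvw Dwu eqxx.
Qed.

End QuasiTransitive.

Lemma H_length_le_size (V W : finType) (H : rel W) (rho : V -> V -> W) x y s :
  H_length H rho x (y :: s) <= size (y :: s).
Proof.
rewrite /= ltnS; elim: s x y => //= z s IH x y.
by rewrite -add1n leq_add ?IH ?leq_b1.
Qed.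

Lemma closure_arc_of_walk (V W : finType) (D : rel V) (H : rel W) (rho : V -> V -> W)
    k x p y :
  x != y -> walk D x p y -> size p <= k.-1 -> closure_arc D H rho k x y.
Proof.
move=> xy xpy p_le; have [[|z s] [Dp' Up' last_p'] p'_le] := dpath_of_walk xpy.
  by rewrite -last_p' eqxx in xy.
split=> //; exists (z :: s); split=> //.
exact: leq_trans (H_length_le_size _ _ _ _ _) (leq_trans p'_le p_le).
Qed.

Theorem corollary18 (V W : finType) (D : rel V) (H : rel W) (rho : V -> V -> W)
    (k : nat) (u v : V) :
  irreflexive D ->
  three_quasi_transitive D ->
  5 <= k ->
  closure_arc D H rho k u v ->
  ~ closure_arc D H rho k v u ->
  dist_le D u v 2.
Proof.
move=> _ qtD k5 [uv [p [[Dp _ last_p] _]]] not_vu.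
have upv : walk D u p v by rewrite /walk Dp last_p eqxx.
have [q gq] := geodesic_exists upv.
have [q_short | q_long] := leqP (size q) 2.
  have [q' q'_dpath q'_le] := dpath_of_walk gq.1.
  by exists q'; split=> //; apply: leq_trans q_short.
have [r vru r_le] := geodesic_return_walk qtD gq q_long.
by case: not_vu; apply: closure_arc_of_walk vru _; rewrite 1?eq_sym //; lia.
Qed.
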